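(* Let $s\in\mathbb{R}$ be Gaussian distributed with variance $\sigma^2$ (arbitrary mean). Let $t\in\mathbb{R}$, $p\in(0,1/e]$, $L=8\sigma^{-1}\sqrt{\ln p^{-1}}$, and $0\le\varepsilon\le 1/L$. If $\Pr[s\ge t-\varepsilon]\ge p$ and $\Pr[s\le t]\ge p$, then \[ \Pr[s\ge t-\varepsilon\mid s\le t]\le e^3\varepsilon L\cdot\Pr[s\ge t]. \] *)

From HB Require Import structures.
From mathcomp Require Import all_boot all_order all_algebra.
From mathcomp Require Import all_classical all_reals all_analysis.
Set Implicit Arguments. Unset Strict Implicit. Unset Printing Implicit Defensive.
Import Order.TTheory GRing.Theory Num.Theory.
Local Open Scope classical_set_scope.
Local Open Scope ring_scope.

(* Probability that s ~ N(m, sigma^2) lies in A, as a real number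
   (normal_prob is the library's Gaussian probability measure, sigma = std dev). *)
Definition gPr {R : realType} (m sigma : R) (A : set R) : R :=
  fine (normal_prob m sigma A).

Definition gPr_cond {R : realType} (m sigma : R) (A B : set R) : R :=
  gPr m sigma (A `&` B) / gPr m sigma B.

From HB Require Import structures.
From mathcomp Require Import all_boot all_order all_algebra.
From mathcomp Require Import all_classical all_reals all_analysis.
From mathcomp Require Import measurable_realfun normal_distribution ring lra.
Set Implicit Arguments. Unset Strict Implicit. Unset Printing Implicit Defensive.
Import Order.TTheory GRing.Theory Num.Theory.
Local Open Scope classical_set_scope.
Local Open Scope ring_scope.

(* Write d = t - m and f for the density.  On the window [t - eps, t] the
   density is at most f(t) exp(max(d, 0) eps / sigma^2), so the numerator of
   the conditional probability is at most eps f(t) exp(max(d, 0) eps / sigma^2).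
   Of the two tails at t, the one away from the mean contains an interval of
   width h = sigma^2 / (|d| + sigma) on which f >= f(t) / e, and the one
   containing the mean contains an interval of width sigma ending at m on which
   f >= f(m) / sqrt e; hence Pr[s >= t] Pr[s <= t] >= h sigma f(m) f(t) e^(-3/2).
   The bounds Pr >= p, combined with the tail estimate
   Pr[|s - m| >= a] <= 2 exp(-3 a^2 / (8 sigma^2)), force
   |d| <= eps + 3 sigma sqrt(ln p^-1); with eps L <= 1 this gives
   max(d, 0) eps / sigma^2 <= 1/2 and L h sigma f(m) >= 1/2, and the
   constants combine to e^3. *)

Lemma ln_inv_ge1 (R : realType) (p : R) :
  0 < p -> p <= (expR 1)^-1 -> 1 <= ln p^-1.
Proof.
move=> p_gt0 p_le; rewrite -[leLHS](expRK 1) ler_ln ?posrE ?expR_gt0 ?invr_gt0 //.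
by rewrite -[leLHS]invrK lef_pV2 ?posrE ?invr_gt0 ?expR_gt0.
Qed.

Lemma gauss_tail_radius_le (R : realType) (s p w : R) :
  0 < s -> 0 < p -> p <= (expR 1)^-1 -> 0 <= w ->
  p <= 2 * expR (- (3 * w ^+ 2) / (s ^+ 2 * 8)) ->
  w <= 3 * Num.sqrt (ln p^-1) * s.
Proof.
move=> s_gt0 p_gt0 p_le w_ge0 p_tail.
have l_ge1 := ln_inv_ge1 p_gt0 p_le; set l := ln p^-1 in l_ge1 *.
have e_ge2 : 2 <= expR 1 :> R by have := expR_ge1Dx (1 : R); lra.
have : - l <= 1 - 3 * w ^+ 2 / (s ^+ 2 * 8).
  rewrite -ler_expR /l lnV ?posrE // opprK lnK ?posrE // expRD.
  by apply: (le_trans p_tail); rewrite mulNr ler_wpM2r ?expR_ge0.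
move=> l_bound; have : 3 * w ^+ 2 / (s ^+ 2 * 8) <= 1 + l by lra.
rewrite ler_pdivrMr ?mulr_gt0 ?exprn_gt0 // => w_sqr.
have sqrt_l : Num.sqrt l ^+ 2 = l by rewrite sqr_sqrtr // (le_trans _ l_ge1).
have r_ge0 : 0 <= 3 * Num.sqrt l * s by rewrite !mulr_ge0 ?sqrtr_ge0 ?ltW.
have : w ^+ 2 <= (3 * Num.sqrt l * s) ^+ 2.
  rewrite !exprMn sqrt_l; have : 0 < s ^+ 2 by rewrite exprn_gt0.
  nra.
nra.
Qed.

Lemma sqr_window_ge (R : realFieldType) (d e y : R) :
  0 <= e -> d - e <= y -> y <= d -> d ^+ 2 - 2 * Num.max d 0 * e <= y ^+ 2.
Proof.
by move=> e_ge0 y_ge y_le; case: (lerP 0 d) => d_sgn; nra.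
Qed.

Lemma sqr_far_le (R : realFieldType) (s u y : R) :
  0 < s -> 0 <= u -> u <= y -> y <= u + s ^+ 2 / (u + s) ->
  y ^+ 2 <= u ^+ 2 + 2 * s ^+ 2.
Proof.
move=> s_gt0 u_ge0 y_ge y_le.
set h := s ^+ 2 / (u + s) in y_le.
have h_def : h * (u + s) = s ^+ 2 by rewrite divfK // gt_eqF //; lra.
have h_ge0 : 0 <= h by nra.
have h_le : h <= s by nra.
nra.
Qed.

Lemma expR_window_le (R : realType) (s r e d k : R) :
  0 < s -> 1 <= r -> 0 <= e -> e * (8 / s * r) <= 1 ->
  `|d| <= e + 3 * r * s -> 1 / 3 <= k ->
  expR (Num.max d 0 * e / s ^+ 2) <=
    expR (3 / 2) * (8 / s * r) * (s ^+ 2 / (`|d| + s)) * k.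
Proof.
move=> s_gt0 r_ge1 e_ge0 eL_le1 d_le k_ge.
have s_neq0 : s != 0 by rewrite gt_eqF.
have ds_gt0 : 0 < `|d| + s by rewrite ltr_wpDl.
have e8r_le : e * 8 * r <= s.
  have eL : e * (8 / s * r) = e * 8 * r / s by field.
  by move: eL_le1; rewrite eL ler_pdivrMr // mul1r.
have d_max : Num.max d 0 <= `|d| by case: (lerP 0 d) => _; rewrite ?ler_norm ?normr_ge0.
have expo_le : Num.max d 0 * e / s ^+ 2 <= 1 / 2.
  rewrite ler_pdivrMr ?exprn_gt0 //.
  have : Num.max d 0 * e <= (e + 3 * r * s) * e by rewrite ler_wpM2r // (le_trans d_max).
  have e_le : e <= s / 8 by nra.
  have : e * e <= s / 8 * (s / 8) by nra.
  have : 3 * r * s * e <= 3 * s * (s / 8) by nra.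
  nra.
have ratio_ge : 1 / 2 <= 8 / s * r * (s ^+ 2 / (`|d| + s)) * k.
  have -> : 8 / s * r * (s ^+ 2 / (`|d| + s)) = 8 * r * s / (`|d| + s).
    by field; rewrite gt_eqF.
  have : 3 / 2 <= 8 * r * s / (`|d| + s) by rewrite ler_pdivlMr //; nra.
  nra.
have e_ge2 : 2 <= expR 1 :> R by have := expR_ge1Dx (1 : R); lra.
have split_exp : expR (3 / 2) = expR 1 * expR (1 / 2) :> R by rewrite -expRD; congr expR; lra.
apply: (@le_trans _ _ (expR (1 / 2))); first by rewrite ler_expR.
rewrite split_exp.
have -> : expR 1 * expR (1 / 2) * (8 / s * r) * (s ^+ 2 / (`|d| + s)) * k =
  expR (1 / 2) * (expR 1 * (8 / s * r * (s ^+ 2 / (`|d| + s)) * k)) by ring.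
rewrite ler_peMr ?expR_ge0 //; nra.
Qed.

Lemma normal_peak_mul2 (R : realType) (s : R) : normal_peak s = 2 * normal_peak (2 * s).
Proof.
rewrite /normal_peak; have -> : (2 * s) ^+ 2 * pi *+ 2 = 2 ^+ 2 * (s ^+ 2 * pi *+ 2) :> R.
  by rewrite exprMn -mulrA mulrnAr.
rewrite sqrtrM ?sqr_ge0 // sqrtr_sqr ger0_norm //.
by rewrite invfM mulrA divff ?mul1r.
Qed.

Lemma normal_peak_ge_third (R : realType) (s : R) : 0 < s -> 1 / 3 <= s * normal_peak s.
Proof.
move=> s_gt0; have pi_lt4 : pi < 4 :> R by have := @pihalf_lt2 R; lra.
have pi_gt0 : 0 < pi :> R by exact: pi_gt0.
set v := s ^+ 2 * pi *+ 2.
have v_gt0 : 0 < v by rewrite pmulrn_lgt0 // mulr_gt0 // exprn_gt0.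
have sqrt_v_le : Num.sqrt v <= 3 * s.
  have norm_3s : `|3 * s| = 3 * s by rewrite ger0_norm // mulr_ge0 // ltW.
  rewrite -norm_3s -sqrtr_sqr ler_sqrt ?sqr_ge0 //.
  rewrite /v -mulr_natr exprMn; have : 0 < s ^+ 2 by rewrite exprn_gt0.
  nra.
have sqrt_v_gt0 : 0 < Num.sqrt v by rewrite sqrtr_gt0.
by rewrite /normal_peak -/v ler_pdivlMr // mul1r mulrC ler_pdivrMr // mulrC.
Qed.

Section gaussian_interval_bounds.
Variables (R : realType) (m s : R).
Hypothesis s_gt0 : 0 < s.

Lemma normal_pdf_expR (x : R) :
  normal_pdf m s x = normal_peak s * expR (- (x - m) ^+ 2 / (s ^+ 2 *+ 2)).
Proof. by rewrite normal_pdfE ?gt_eqF. Qed.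

Lemma gPrE (A : set R) : measurable A -> (gPr m s A)%:E = normal_prob m s A.
Proof.
move=> mA; rewrite fineK // ge0_fin_numE //.
by rewrite (le_lt_trans (probability_le1 (normal_prob m s) mA)) ?ltry.
Qed.

Lemma le_gPr (A B : set R) : measurable A -> measurable B -> A `<=` B ->
  gPr m s A <= gPr m s B.
Proof. by move=> mA mB AB; rewrite -lee_fin !gPrE // le_measure ?inE. Qed.

Let gaussian_weight_le (c x : R) : c <= (x - m) ^+ 2 ->
  normal_pdf m s x <= normal_peak s * expR (- c / (s ^+ 2 *+ 2)).
Proof.
move=> c_le; rewrite normal_pdf_expR ler_wpM2l ?normal_peak_ge0 // ler_expR !mulNr lerN2.
by rewrite ler_pM2r // invr_gt0 pmulrn_lgt0 // exprn_gt0.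
Qed.

Let gaussian_weight_ge (c x : R) : (x - m) ^+ 2 <= c ->
  normal_peak s * expR (- c / (s ^+ 2 *+ 2)) <= normal_pdf m s x.
Proof.
move=> c_ge; rewrite normal_pdf_expR ler_wpM2l ?normal_peak_ge0 // ler_expR !mulNr lerN2.
by rewrite ler_pM2r // invr_gt0 pmulrn_lgt0 // exprn_gt0.
Qed.

Let integral_itv_cst (a b c : R) : a <= b ->
  (\int[@lebesgue_measure R]_(x in `[a, b]) (cst c%:E) x = ((b - a) * c)%:E)%E.
Proof.
move=> ab; rewrite integral_cst // [X in (_ * X)%E]lebesgue_measure_itv /=.
case: ifPn => [_|]; first by rewrite -EFinD -EFinM mulrC.
by rewrite lte_fin -leNgt => ba; rewrite (@le_anti _ _ b a) ?ab ?ba // subrr mul0r mule0.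
Qed.

Let measurable_EFin_pdf (D : set R) (s' : R) : measurable_fun D (EFin \o normal_pdf m s').
Proof. by apply/measurable_EFinP; apply: measurable_funTS; exact: measurable_normal_pdf. Qed.

Lemma gPr_itv_le (a b c : R) : a <= b -> (forall x, a <= x <= b -> c <= (x - m) ^+ 2) ->
  gPr m s `[a, b] <= (b - a) * (normal_peak s * expR (- c / (s ^+ 2 *+ 2))).
Proof.
move=> ab c_le; rewrite -lee_fin gPrE // -integral_itv_cst //.
apply: ge0_le_integral => //= [x _||x]; rewrite ?lee_fin ?normal_pdf_ge0 //.
- exact: measurable_EFin_pdf.
- by rewrite in_itv => /c_le /gaussian_weight_le.
Qed.

Lemma gPr_ge_itv (A : set R) (a b c : R) : measurable A -> `[a, b] `<=` A -> a <= b ->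
  (forall x, a <= x <= b -> (x - m) ^+ 2 <= c) ->
  (b - a) * (normal_peak s * expR (- c / (s ^+ 2 *+ 2))) <= gPr m s A.
Proof.
move=> mA abA ab c_ge; apply: le_trans (le_gPr _ mA abA) => //.
rewrite -lee_fin gPrE // -integral_itv_cst //.
apply: ge0_le_integral => //= [x _||x]; rewrite ?lee_fin.
- by rewrite mulr_ge0 ?normal_peak_ge0 ?expR_ge0.
- exact: measurable_EFin_pdf.
- by rewrite in_itv => /c_ge /gaussian_weight_ge.
Qed.

(* Comparing with the density of N(m, (2 sigma)^2), whose total mass is 1,
   avoids integrating the Gaussian tail. *)
Let normal_pdf_le_wide (c y : R) : c <= (y - m) ^+ 2 ->
  normal_pdf m s y <= 2 * expR (- (3 * c) / (s ^+ 2 * 8)) * normal_pdf m (2 * s) y.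
Proof.
move=> c_le; have s_neq0 : s != 0 by rewrite gt_eqF.
rewrite !normal_pdfE ?mulf_neq0 // /normal_fun normal_peak_mul2 [leRHS]mulrACA -expRD.
rewrite ler_wpM2l ?mulr_ge0 ?normal_peak_ge0 // ler_expR -subr_ge0.
have -> : - (3 * c) / (s ^+ 2 * 8) + - (y - m) ^+ 2 / ((2 * s) ^+ 2 *+ 2)
    - - (y - m) ^+ 2 / (s ^+ 2 *+ 2) = 3 * ((y - m) ^+ 2 - c) / (s ^+ 2 * 8).
  by field.
by rewrite divr_ge0 ?mulr_ge0 ?subr_ge0 ?exprn_ge0 // ltW.
Qed.

Lemma gPr_tail (A : set R) (c : R) : measurable A -> (forall y, A y -> c <= (y - m) ^+ 2) ->
  gPr m s A <= 2 * expR (- (3 * c) / (s ^+ 2 * 8)).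
Proof.
move=> mA c_le; rewrite -lee_fin gPrE //.
set k := 2 * expR _; have k_ge0 : 0 <= k by rewrite mulr_ge0 ?expR_ge0.
have mk : measurable_fun setT (fun x => (k * normal_pdf m (2 * s) x)%:E).
  by apply/measurable_EFinP; apply: measurable_funM => //; exact: measurable_normal_pdf.
apply: (@le_trans _ _ (\int[lebesgue_measure]_(x in A) (k * normal_pdf m (2 * s) x)%:E)%E).
  apply: ge0_le_integral => //= [x _|||x /c_le /normal_pdf_le_wide]; rewrite ?lee_fin //.
  - exact: normal_pdf_ge0.
  - exact: measurable_EFin_pdf.
  - exact: measurable_funS mk.
apply: (@le_trans _ _ (\int[lebesgue_measure]_x (k * normal_pdf m (2 * s) x)%:E)%E).
  apply: ge0_subset_integral => //= x _.
  by rewrite lee_fin mulr_ge0 ?normal_pdf_ge0.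
under eq_integral do rewrite EFinM.
rewrite ge0_integralZl //= ?integral_normal_pdf ?mule1 //.
- exact: measurable_EFin_pdf.
- by move=> x _; rewrite lee_fin normal_pdf_ge0.
Qed.

Lemma dist_to_mean_le (t eps p : R) : 0 < p -> p <= (expR 1)^-1 -> 0 <= eps ->
  p <= gPr m s `[t - eps, +oo[ -> p <= gPr m s `]-oo, t] ->
  `|t - m| <= eps + 3 * Num.sqrt (ln p^-1) * s.
Proof.
move=> p_gt0 p_le eps_ge0 p_right p_left.
have r_ge0 : 0 <= 3 * Num.sqrt (ln p^-1) * s by rewrite !mulr_ge0 ?sqrtr_ge0 ?ltW.
have [m_le_t|t_lt_m] := leP m t; last first.
  suff : m - t <= 3 * Num.sqrt (ln p^-1) * s.
    by rewrite ltr0_norm ?subr_lt0 // opprB; lra.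
  apply: (gauss_tail_radius_le s_gt0 p_gt0 p_le); first by rewrite subr_ge0 ltW.
  apply: (le_trans p_left); apply: gPr_tail => [|y /=]; first exact: measurable_itv.
  by rewrite in_itv /= => y_le_t; nra.
rewrite ger0_norm ?subr_ge0 //; have [|eps_lt] := leP (t - m) eps; first lra.
suff : t - m - eps <= 3 * Num.sqrt (ln p^-1) * s by lra.
apply: (gauss_tail_radius_le s_gt0 p_gt0 p_le); first lra.
apply: (le_trans p_right); apply: gPr_tail => [|y /=]; first exact: measurable_itv.
by rewrite in_itv /= andbT => y_ge; nra.
Qed.

Lemma gPr_window_le (t eps : R) : 0 <= eps ->
  gPr m s `[t - eps, t] <= eps * (normal_peak s *
    expR (- (t - m) ^+ 2 / (s ^+ 2 *+ 2)) * expR (Num.max (t - m) 0 * eps / s ^+ 2)).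
Proof.
move=> eps_ge0.
set c := (t - m) ^+ 2 - 2 * Num.max (t - m) 0 * eps.
have expo : - c / (s ^+ 2 *+ 2) =
    - (t - m) ^+ 2 / (s ^+ 2 *+ 2) + Num.max (t - m) 0 * eps / s ^+ 2.
  by rewrite /c; field; rewrite gt_eqF.
apply: le_trans (gPr_itv_le (c := c) _ _) _.
- lra.
- by move=> x /andP[x_ge x_le]; apply: sqr_window_ge; lra.
- have -> : t - (t - eps) = eps by ring.
  by rewrite expo expRD !mulrA.
Qed.

(* The width s^2 / (u + s) keeps (x - m)^2 below u^2 + 2 s^2 on the interval,
   so the density drops by at most a factor e there. *)
Lemma gPr_ge_far (A : set R) (a u : R) : measurable A -> 0 <= u ->
  `[a, a + s ^+ 2 / (u + s)] `<=` A ->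
  (forall x, a <= x <= a + s ^+ 2 / (u + s) -> u <= `|x - m| <= u + s ^+ 2 / (u + s)) ->
  s ^+ 2 / (u + s) * (normal_peak s * expR (- u ^+ 2 / (s ^+ 2 *+ 2)) * expR (- 1))
    <= gPr m s A.
Proof.
move=> mA u_ge0 itvA x_dist.
have expo : - (u ^+ 2 + 2 * s ^+ 2) / (s ^+ 2 *+ 2) = - u ^+ 2 / (s ^+ 2 *+ 2) + - 1.
  by field; rewrite gt_eqF.
apply: le_trans (gPr_ge_itv (c := u ^+ 2 + 2 * s ^+ 2) mA itvA _ _).
- by rewrite expo expRD addrAC subrr add0r !mulrA lexx.
- by rewrite lerDl divr_ge0 ?sqr_ge0 ?addr_ge0 // ltW.
- move=> x /x_dist /andP[x_ge x_le].
  by rewrite -(real_normK (num_real (x - m))); apply: sqr_far_le.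
Qed.

Lemma gPr_ge_near (A : set R) (a : R) :
  measurable A -> `[a, a + s] `<=` A -> a <= m <= a + s ->
  s * (normal_peak s * expR (- (1 / 2))) <= gPr m s A.
Proof.
move=> mA itvA /andP[a_le a_ge].
have expo : - s ^+ 2 / (s ^+ 2 *+ 2) = - (1 / 2) by field; rewrite gt_eqF.
apply: le_trans (gPr_ge_itv (c := s ^+ 2) mA itvA _ _).
- by rewrite expo addrAC subrr add0r lexx.
- by rewrite lerDl ltW.
- by move=> x /andP[x_ge x_le]; nra.
Qed.

Lemma gPr_tails_ge (t : R) :
  expR (- (3 / 2)) * (s ^+ 2 / (`|t - m| + s) * s * normal_peak s ^+ 2 *
    expR (- `|t - m| ^+ 2 / (s ^+ 2 *+ 2))) <= gPr m s `[t, +oo[ * gPr m s `]-oo, t].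
Proof.
set u := `|t - m|; set h := s ^+ 2 / (u + s).
have h_ge0 : 0 <= h by rewrite divr_ge0 ?sqr_ge0 ?addr_ge0 ?normr_ge0 // ltW.
have split_expo : expR (- (3 / 2)) = expR (- 1) * expR (- (1 / 2)) :> R.
  by rewrite -expRD; congr expR; field.
have -> : expR (- (3 / 2)) * (h * s * normal_peak s ^+ 2 * expR (- u ^+ 2 / (s ^+ 2 *+ 2)))
    = (h * (normal_peak s * expR (- u ^+ 2 / (s ^+ 2 *+ 2)) * expR (- 1))) *
      (s * (normal_peak s * expR (- (1 / 2)))) by rewrite split_expo; ring.
have far_ge0 : 0 <= h * (normal_peak s * expR (- u ^+ 2 / (s ^+ 2 *+ 2)) * expR (- 1)).
  by rewrite mulr_ge0 // !mulr_ge0 ?normal_peak_ge0 ?expR_ge0.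
have near_ge0 : 0 <= s * (normal_peak s * expR (- (1 / 2))).
  by rewrite !mulr_ge0 ?normal_peak_ge0 ?expR_ge0 ?ltW.
have [m_le_t|t_lt_m] := leP m t.
- have u_eq : u = t - m by rewrite /u ger0_norm ?subr_ge0.
  apply: ler_pM => //.
  + apply: (gPr_ge_far (a := t)) => [|||x]; rewrite ?normr_ge0 //.
      by move=> x /=; rewrite !in_itv /= => /andP[-> _].
    by move=> /andP[x_ge x_le]; rewrite ger0_norm; lra.
  + apply: (gPr_ge_near (a := m - s)); first exact: measurable_itv.
      by move=> x /=; rewrite ?in_itv /= => /andP[_ x_le]; lra.
    by rewrite subrK gerBl lexx andbT ltW.
- have u_eq : u = m - t by rewrite /u ltr0_norm ?opprB // subr_lt0.
  rewrite [leRHS]mulrC; apply: ler_pM => //.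
  + apply: (gPr_ge_far (a := t - h)) => [|||x]; rewrite ?normr_ge0 //.
    * by move=> x /=; rewrite ?in_itv /= /h => /andP[_ x_le]; lra.
    * by rewrite /h => /andP[x_ge x_le]; rewrite ltr0_norm ?subr_lt0; lra.
  + apply: (gPr_ge_near (a := m)); first exact: measurable_itv.
      by move=> x /=; rewrite ?in_itv /= ?andbT => /andP[x_ge _]; lra.
    by rewrite lexx lerDl ltW.
Qed.

Lemma gPr_window_le_tails (t eps C : R) : 0 <= eps -> 0 <= C ->
  expR (Num.max (t - m) 0 * eps / s ^+ 2) <=
    expR (3 / 2) * C * (s ^+ 2 / (`|t - m| + s)) * (s * normal_peak s) ->
  gPr m s `[t - eps, t] <= expR 3 * eps * C * gPr m s `[t, +oo[ * gPr m s `]-oo, t].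
Proof.
move=> eps_ge0 C_ge0 expo_le.
apply: le_trans (gPr_window_le t eps_ge0) _.
have coef_ge0 : 0 <= expR 3 * eps * C by rewrite !mulr_ge0 ?expR_ge0.
rewrite -[leRHS]mulrA; apply: le_trans _ (ler_wpM2l coef_ge0 (gPr_tails_ge t)).
rewrite real_normK ?num_real //.
set K := normal_peak s; set G := expR (- (t - m) ^+ 2 / _).
have -> : expR 3 * eps * C * (expR (- (3 / 2)) * (s ^+ 2 / (`|t - m| + s) * s * K ^+ 2 * G))
    = eps * (K * G) * (expR (3 / 2) * C * (s ^+ 2 / (`|t - m| + s)) * (s * K)).
  have e3 : expR 3 = expR (3 / 2) * expR (3 / 2) :> R by rewrite -expRD; congr expR; field.
  have ds_gt0 : 0 < `|t - m| + s by rewrite ltr_wpDl.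
  by rewrite e3 expRN; field; rewrite !gt_eqF ?expR_gt0.
rewrite -[leRHS]mulrA; apply: ler_wpM2l => //; apply: ler_wpM2l expo_le.
by rewrite mulr_ge0 ?normal_peak_ge0 ?expR_ge0.
Qed.

End gaussian_interval_bounds.

Theorem lemma4p8 (R : realType) (m sigma t p eps : R)
  (hsigma : 0 < sigma)
  (hp0 : 0 < p) (hp1 : p <= (expR 1)^-1)
  (heps0 : 0 <= eps)
  (heps1 : eps <= (8 / sigma * Num.sqrt (ln p^-1))^-1)
  (h1 : p <= gPr m sigma `[t - eps, +oo[)
  (h2 : p <= gPr m sigma `]-oo, t]) :
  gPr_cond m sigma `[t - eps, +oo[ `]-oo, t]
    <= expR 3 * eps * (8 / sigma * Num.sqrt (ln p^-1)) * gPr m sigma `[t, +oo[.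
Proof.
have l_ge1 := ln_inv_ge1 hp0 hp1.
have r_ge1 : 1 <= Num.sqrt (ln p^-1) by rewrite -sqrtr1 ler_sqrt // (le_trans _ l_ge1).
have L_gt0 : 0 < 8 / sigma * Num.sqrt (ln p^-1) by rewrite !mulr_gt0 ?invr_gt0 //; lra.
have epsL_le1 : eps * (8 / sigma * Num.sqrt (ln p^-1)) <= 1.
  by move: heps1; rewrite -[_^-1]div1r ler_pdivlMr.
have window : `[t - eps, +oo[ `&` `]-oo, t] = `[t - eps, t]%classic.
  by rewrite [RHS]set_itv_splitI.
rewrite /gPr_cond window ler_pdivrMr; last by apply: lt_le_trans h2.
apply: gPr_window_le_tails => //; first exact: ltW.
apply: expR_window_le => //; last exact: normal_peak_ge_third.
exact: dist_to_mean_le h1 h2.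
Qed.
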